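(* Let $X$ be a zero-dimensional compact Hausdorff space and let $X=\varprojlim S$ for an inverse system $S=\{X_\alpha,p_{\alpha\beta};\mathcal A\}$ of compact Hausdorff spaces over a directed set $\mathcal A$, with limit projections $p_\alpha\colon X\to X_\alpha$. Then the natural map $h=(J(p_\alpha))_{\alpha\in\mathcal A}\colon J(X)\to\varprojlim J(S)$, where $J(S)=\{J(X_\alpha),J(p_{\alpha\beta});\mathcal A\}$, is a homeomorphism.
   Context: A max-min measure on a compact Hausdorff space $X$ is a functional $\mu\colon C(X)\to\mathbb R$ (not assumed continuous) such that $\mu(c_X)=c$ for constants $c$, $\mu(\varphi\vee\psi)=\mu(\varphi)\vee\mu(\psi)$, and $\mu(c\wedge\varphi)=c\wedge\mu(\varphi)$ for $c\in\mathbb R$. $J(X)$ is the set of max-min measures with the topology of pointwise convergence on $C(X)$. For a continuous map $f\colon X\to Y$, $J(f)\colon J(X)\to J(Y)$ is $J(f)(\mu)(\varphi)=\mu(\varphi\circ f)$. A space is zero-dimensional if it has a base of clopen sets. *)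

From Stdlib Require Import Reals List.
Open Scope R_scope.
Unset Implicit Arguments.

Definition topology (X : Type) := (X -> Prop) -> Prop.

Definition is_topology {X : Type} (T : topology X) : Prop :=
  T (fun _ => True) /\ T (fun _ => False) /\
  (forall U V, T U -> T V -> T (fun x => U x /\ V x)) /\
  (forall F : (X -> Prop) -> Prop, (forall U, F U -> T U) ->
      T (fun x => exists U, F U /\ U x)).

Definition continuous {X Y : Type} (TX : topology X) (TY : topology Y)
  (f : X -> Y) : Prop :=
  forall V, TY V -> TX (fun x => V (f x)).

Definition cont_on {X Y : Type} (TX : topology X) (A : X -> Prop)
  (TY : topology Y) (f : X -> Y) : Prop :=
  forall V, TY V -> exists U, TX U /\ forall x, A x -> (U x <-> V (f x)).

Definition homeo_on {X Y : Type} (TX : topology X) (A : X -> Prop)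
  (TY : topology Y) (B : Y -> Prop) (h : X -> Y) : Prop :=
  (forall x, A x -> B (h x)) /\
  exists g : Y -> X,
    (forall y, B y -> A (g y)) /\
    (forall x, A x -> g (h x) = x) /\
    (forall y, B y -> h (g y) = y) /\
    cont_on TX A TY h /\ cont_on TY B TX g.

Definition top_compact {X : Type} (T : topology X) : Prop :=
  forall F : (X -> Prop) -> Prop,
    (forall U, F U -> T U) -> (forall x, exists U, F U /\ U x) ->
    exists l : list (X -> Prop),
      (forall U, In U l -> F U) /\ (forall x, exists U, In U l /\ U x).

Definition top_hausdorff {X : Type} (T : topology X) : Prop :=
  forall x y, x <> y -> exists U V, T U /\ T V /\ U x /\ V y /\
    (forall z, ~ (U z /\ V z)).

Definition clopen {X : Type} (T : topology X) (W : X -> Prop) : Prop :=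
  T W /\ T (fun x => ~ W x).

Definition zero_dim {X : Type} (T : topology X) : Prop :=
  forall U x, T U -> U x -> exists W, clopen T W /\ W x /\ (forall y, W y -> U y).

Definition R_top : topology R :=
  fun U => forall x, U x -> exists eps, 0 < eps /\
    forall y, Rabs (y - x) < eps -> U y.

Definition CF {X : Type} (T : topology X) : Type :=
  { phi : X -> R | continuous T R_top phi }.

(* max-min measures: mu : C(X) -> R (no continuity assumed) *)
Definition maxmin {X : Type} (T : topology X) (mu : CF T -> R) : Prop :=
  (forall (c : R) (phi : CF T), (forall x, proj1_sig phi x = c) -> mu phi = c) /\
  (forall phi psi chi : CF T,
     (forall x, proj1_sig chi x = Rmax (proj1_sig phi x) (proj1_sig psi x)) ->
     mu chi = Rmax (mu phi) (mu psi)) /\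
  (forall (c : R) (phi chi : CF T),
     (forall x, proj1_sig chi x = Rmin c (proj1_sig phi x)) ->
     mu chi = Rmin c (mu phi)).

(* topology of pointwise convergence on C(X) (on the ambient space R^{C(X)};
   J(X) carries the subspace topology) *)
Definition ptw_top {X : Type} (T : topology X) : topology (CF T -> R) :=
  fun U => forall mu, U mu -> exists (l : list (CF T)) (eps : R), 0 < eps /\
    forall nu, (forall phi, In phi l -> Rabs (nu phi - mu phi) < eps) -> U nu.

Lemma cont_comp_CF {X Y : Type} (TX : topology X) (TY : topology Y)
  (f : X -> Y) (hf : continuous TX TY f) (psi : CF TY) :
  continuous TX R_top (fun x => proj1_sig psi (f x)).
Proof. intros V HV. exact (hf _ (proj2_sig psi V HV)). Qed.

Definition Jmap {X Y : Type} (TX : topology X) (TY : topology Y)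
  (f : X -> Y) (hf : continuous TX TY f) (mu : CF TX -> R) : CF TY -> R :=
  fun psi => mu (exist _ (fun x => proj1_sig psi (f x)) (cont_comp_CF TX TY f hf psi)).

Definition prod_top {A : Type} {Y : A -> Type} (T : forall a, topology (Y a))
  : topology (forall a, Y a) :=
  fun U => forall x, U x -> exists l : list {a : A & Y a -> Prop},
    (forall q, In q l -> T (projT1 q) (projT2 q) /\ projT2 q (x (projT1 q))) /\
    (forall y, (forall q, In q l -> projT2 q (y (projT1 q))) -> U y).

Definition directed {A : Type} (le : A -> A -> Prop) : Prop :=
  (forall a, le a a) /\ (forall a b c, le a b -> le b c -> le a c) /\
  (forall a b, exists c, le a c /\ le b c).

Definition inv_system {A : Type} (le : A -> A -> Prop) (X : A -> Type)
  (p : forall a b, X b -> X a) : Prop :=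
  (forall a x, p a a x = x) /\
  (forall a b c x, le a b -> le b c -> p a b (p b c x) = p a c x).

Definition Lim {A : Type} (le : A -> A -> Prop) (X : A -> Type)
  (p : forall a b, X b -> X a) : Type :=
  { x : forall a, X a | forall a b, le a b -> p a b (x b) = x a }.

Definition lim_top {A : Type} (le : A -> A -> Prop) (X : A -> Type)
  (p : forall a b, X b -> X a) (T : forall a, topology (X a))
  : topology (@Lim A le X p) :=
  fun V => exists U, prod_top T U /\ forall x : @Lim A le X p, V x <-> U (proj1_sig x).

Definition lim_proj {A : Type} (le : A -> A -> Prop) (X : A -> Type)
  (p : forall a b, X b -> X a) (a : A) (x : @Lim A le X p) : X a := proj1_sig x a.

Lemma lim_proj_cont {A : Type} (le : A -> A -> Prop) (X : A -> Type)
  (p : forall a b, X b -> X a) (T : forall a, topology (X a)) (a : A) :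
  continuous (@lim_top A le X p T) (T a) (@lim_proj A le X p a).
Proof.
  intros V HV. exists (fun y => V (y a)). split.
  - intros y Hy. exists (existT (fun a => X a -> Prop) a V :: nil). split.
    + intros q [<-|[]]. simpl. auto.
    + intros z Hz. apply (Hz _ (or_introl eq_refl)).
  - intros x. unfold lim_proj. tauto.
Qed.

Definition hJ {A : Type} (le : A -> A -> Prop) (X : A -> Type)
  (p : forall a b, X b -> X a) (T : forall a, topology (X a))
  (mu : CF (@lim_top A le X p T) -> R) : forall a, CF (T a) -> R :=
  fun a => Jmap (@lim_top A le X p T) (T a) (@lim_proj A le X p a) (@lim_proj_cont A le X p T a) mu.

Definition limJ {A : Type} (le : A -> A -> Prop) (X : A -> Type)
  (p : forall a b, X b -> X a) (T : forall a, topology (X a))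
  (pc : forall a b, le a b -> continuous (T b) (T a) (p a b))
  (m : forall a, CF (T a) -> R) : Prop :=
  (forall a, maxmin (T a) (m a)) /\
  (forall a b (hab : le a b), Jmap (T b) (T a) (p a b) (pc a b hab) (m b) = m a).

From Pilot Require Import Defs.
From Stdlib Require Import Reals List.
From Stdlib Require Import Lra Classical ClassicalEpsilon FunctionalExtensionality PropExtensionality ProofIrrelevance.
From HB Require Import structures.
From mathcomp Require all_boot all_order all_algebra finmap all_classical all_reals topology normedtype Rstruct Rstruct_topology.

(* The inverse of h sends a thread m = (m_a) of max-min measures to
     g m phi = sup { m_c psi | psi o p_c <= phi },
   and everything rests on three facts:
   - max-min measures are non-expansive for the sup-distance
     ([mm_nonexpansive], valid on any space);
   - m_c only sees the image p_c(X) ([m_supp]), because a closed set missing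
     p_c(X) misses some p c b (X_b) ([limit_image_avoid]), which in turn
     follows from the nonemptiness of inverse limits of compacta
     ([thread_exists], by Zorn's lemma);
   - as X is zero-dimensional, the functions psi o p_c are uniformly dense in
     C(X) ([approx], by Urysohn's lemma in the X_c).
   Hence g m phi is within e of m_c psi whenever psi o p_c is within e of phi
   ([g_approx]), from which g m is a max-min measure, g and h are mutually
   inverse, and both are continuous. *)

Module AnalysisBridge.
Import all_boot all_order all_algebra finmap all_classical all_reals topology normedtype Rstruct Rstruct_topology.
Local Open Scope classical_set_scope.

Section Transport.
Variables (Y : Type) (TY : Defs.topology Y) (hT : is_topology TY).

Definition space : Type := Y.
HB.instance Definition _ := gen_eqMixin space.
HB.instance Definition _ := gen_choiceMixin space.

Lemma open_setT : TY setT. Proof. by case: hT. Qed.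

Lemma open_setI : setI_closed TY.
Proof. move=> U V HU HV. by case: hT => _ [_ [H _]]; apply: H. Qed.

Lemma open_bigcup (I : Type) (f : I -> set space) : (forall i, TY (f i)) ->
  TY (\bigcup_i f i).
Proof.
move=> Hf; case: hT => _ [_ [_ H]].
have -> : \bigcup_i f i = (fun x => exists U, (exists i, U = f i) /\ U x).
  apply/funext => x; apply/propext; split.
    by case=> i _ Hx; exists (f i); split=> //; exists i.
  by case=> U [[i ->] Hx]; exists i.
by apply: H => U [i ->]; exact: Hf.
Qed.

HB.instance Definition _ := isOpenTopological.Build space open_setT open_setI open_bigcup.

Lemma space_hausdorff : top_hausdorff TY -> hausdorff_space space.
Proof.
move=> H; rewrite open_hausdorff => x y /eqP nxy.
have [U [V [oU [oV [Ux [Vy D]]]]]] := H x y nxy.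
exists (U, V); first by rewrite !inE.
split => //; apply/eqP; apply/seteqP; split => z //= [Uz Vz].
exact: (D z (conj Uz Vz)).
Qed.

Lemma space_compact : top_compact TY -> compact [set: space].
Proof.
move=> H F PF _.
have FF : Filter F by case: PF.
have [[x Hx]|N] := pselect (exists x : space, cluster F x); first by exists x.
exfalso.
have key : forall x : space, exists U, TY U /\ U x /\ exists A, F A /\ (forall z, U z -> ~ A z).
  move=> x; have : ~ cluster F x by move=> c; apply: N; exists x.
  move=> /existsNP [A /existsNP [B /not_implyP [FA /not_implyP [nB AB]]]].
  case: nB => U [oU Ux UB]; exists U; split => //; split => //; exists A; split => //.
  move=> z Uz Az; apply: AB; exists z; split => //; exact: UB.
have [l [Hl Hc]] := H (fun U => TY U /\ exists A, F A /\ (forall z, U z -> ~ A z))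
  ltac:(by move=> U []) ltac:(by move=> x; have [U [oU [Ux HA]]] := key x; exists U).
have : F (fun z => forall U, List.In U l -> ~ U z).
  elim: l Hl {Hc} => [|U l IH] Hl.
    by apply: (@filterS _ F _ setT); [move=> z _ U []|exact: filterT].
  have [_ [A [FA AU]]] := Hl U (or_introl erefl).
  have FI := @filterI _ F FF _ _ FA (IH (fun V HV => Hl V (or_intror HV))).
  apply: (@filterS _ F FF _ _ _ FI) => z [Az Hz] V [<-|HV]; last exact: Hz.
  by move=> Uz; exact: (AU z Uz Az).
move=> /filter_ex [z Hz].
have [U [HU Uz]] := Hc z.
exact: (Hz U HU Uz).
Qed.

Lemma space_closed (F : set space) : TY (fun y => ~ F y) -> closed F.
Proof. by move=> H; rewrite -[F]setCK closedC. Qed.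

Lemma space_continuous (f : space -> R) : continuous f -> Defs.continuous TY R_top f.
Proof.
move/continuousP => H V HV; apply: (H V).
rewrite openE => x Vx; rewrite /interior.
apply/nbhs_ballP.
have [e [e0 He]] := HV x Vx.
exists e; first by apply/RltP.
move=> y /= /RltP Hy; apply: He.
by rewrite Rabs_minus_sym.
Qed.

Lemma urysohn (hc : top_compact TY) (hh : top_hausdorff TY) (F1 F2 : Y -> Prop) :
  TY (fun y => ~ F1 y) -> TY (fun y => ~ F2 y) -> (forall y, F1 y -> F2 y -> False) ->
  exists u : Y -> R, Defs.continuous TY R_top u /\
     (forall y, F1 y -> u y = 1) /\ (forall y, F2 y -> u y = 0).
Proof.
move=> c1 c2 D.
have N := compact_normal (space_hausdorff hh) (space_compact hc).
have E : (F2 : set space) `&` F1 = set0.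
  by apply/seteqP; split => y // [a b]; exact: (D y b a).
have H := proj1 (@normal_separatorP R space) N (F2 : set space) (F1 : set space)
  (space_closed _ c2) (space_closed _ c1) E.
have [f [cf _ f0 f1]] := proj1 (@uniform_separatorP space R _ _) H.
exists f; split; first exact: space_continuous.
split.
  by move=> y Fy; have := f1 (f y) (ex_intro2 _ _ y Fy erefl).
by move=> y Fy; have := f0 (f y) (ex_intro2 _ _ y Fy erefl).
Qed.
End Transport.

Lemma zorn (S : Type) (s0 : S) (Rl : S -> S -> Prop) :
  (forall t, Rl t t) -> (forall r s t, Rl r s -> Rl s t -> Rl r t) ->
  (forall C : S -> Prop, (forall s t, C s -> C t -> Rl s t \/ Rl t s) ->
      exists t, forall s, C s -> Rl s t) ->
  exists t, forall s, Rl t s -> Rl s t.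
Proof.
move=> h1 h2 h3.
have [t Ht] := @ZL_preorder S s0 (fun s t => `[< Rl s t >])
  ltac:(by move=> x; apply/asboolP)
  ltac:(by move=> r s u /asboolP a /asboolP b; apply/asboolP; exact: h2 a b)
  ltac:(move=> C HC; have [t Ht] := h3 C ltac:(by move=> s u Cs Cu;
          case: (HC s u Cs Cu) => /asboolP; auto);
        by exists t => s Cs; apply/asboolP; exact: Ht).
by exists t => s Hs; have /asboolP := Ht s (introT (asboolP _) Hs).
Qed.
End AnalysisBridge.

From Corelib Require Import ssreflect.
Open Scope R_scope.

Section PredicateTopology.
Context {Y : Type} {TY : topology Y} (hT : is_topology TY).

Lemma top_ext {U V : Y -> Prop} : TY U -> (forall y, U y <-> V y) -> TY V.
Proof.
move=> HU HUV.
have <- : U = V.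
  by apply: functional_extensionality => y; apply: propositional_extensionality.
exact: HU.
Qed.

Lemma top_True : TY (fun _ => True). Proof. by case: hT. Qed.
Lemma top_False : TY (fun _ => False). Proof. by case: hT => _ []. Qed.

Lemma top_inter {U V : Y -> Prop} : TY U -> TY V -> TY (fun y => U y /\ V y).
Proof. by case: hT => _ [_ [H _]]; apply: H. Qed.

Lemma top_union {F : (Y -> Prop) -> Prop} : (forall U, F U -> TY U) ->
  TY (fun y => exists U, F U /\ U y).
Proof. by case: hT => _ [_ [_ H]]; apply: H. Qed.

Lemma top_union2 {U V : Y -> Prop} : TY U -> TY V -> TY (fun y => U y \/ V y).
Proof.
move=> HU HV.
apply: (top_ext (@top_union (fun W => W = U \/ W = V) ltac:(by move=> W [->|->]))).
move=> y; split; first by case=> W [[->|->] Wy]; [left|right].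
by case=> Wy; [exists U|exists V]; split; auto.
Qed.

Lemma top_local (U : Y -> Prop) :
  (forall y, U y -> exists V, TY V /\ V y /\ forall z, V z -> U z) -> TY U.
Proof.
move=> H.
apply: (top_ext (@top_union (fun V => TY V /\ forall z, V z -> U z) ltac:(by move=> V []))).
move=> y; split; first by case=> V [[_ HV] Vy]; exact: HV.
by move=> Uy; have [V [oV [Vy HV]]] := H y Uy; exists V.
Qed.

Lemma top_const (P : Prop) : TY (fun _ => P).
Proof.
case: (classic P) => HP; [apply: (top_ext top_True)|apply: (top_ext top_False)]; tauto.
Qed.

Lemma top_forall_fin (I : Type) (l : list I) (P : I -> Y -> Prop) :
  (forall i, In i l -> TY (P i)) -> TY (fun y => forall i, In i l -> P i y).
Proof.
elim: l => [|i l IH] H.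
  by apply: (top_ext top_True) => y; split => // _ i [].
apply: (top_ext (top_inter (H i (or_introl eq_refl)) (IH (fun j Hj => H j (or_intror Hj))))).
move=> y; split; first by case=> A B j [<-|Hj]; [exact: A|exact: B].
by move=> Hy; split; [apply: Hy; left|move=> j Hj; apply: Hy; right].
Qed.

Lemma closed_forall (I : Type) (P : I -> Prop) (S : I -> Y -> Prop) :
  (forall i, P i -> TY (fun y => ~ S i y)) -> TY (fun y => ~ (forall i, P i -> S i y)).
Proof.
move=> H.
apply: (top_ext (@top_union (fun U => exists i, P i /\ U = fun y => ~ S i y)
  ltac:(by move=> U [i [Pi ->]]; exact: H))) => y; split.
  by case=> U [[i [Pi ->]] nS] Hy; apply: nS; apply: Hy.
move=> nH; apply: NNPP => nE; apply: nH => i Pi; apply: NNPP => nS.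
by apply: nE; exists (fun y => ~ S i y); split => //; exists i.
Qed.

Lemma closed_and (S1 S2 : Y -> Prop) : TY (fun y => ~ S1 y) -> TY (fun y => ~ S2 y) ->
  TY (fun y => ~ (S1 y /\ S2 y)).
Proof.
move=> H1 H2; apply: (top_ext (top_union2 H1 H2)) => y.
split; first by case=> H [A B]; auto.
by move=> H; case: (classic (S1 y)) => A; [right=> B; apply: H|left].
Qed.

Lemma point_complement_open (hh : top_hausdorff TY) (y0 : Y) : TY (fun y => y <> y0).
Proof.
apply: top_local => y ny.
have [U [V [oU [oV [Uy [Vy0 D]]]]]] := hh y y0 ny.
exists U; split => //; split => // z Uz E; subst z.
exact: (D y0 (conj Uz Vy0)).
Qed.

Lemma compact_directed_cover (hc : top_compact TY) (C : Y -> Prop)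
  (F : (Y -> Prop) -> Prop) : TY (fun y => ~ C y) ->
  (forall U, F U -> TY U) -> (forall y, C y -> exists U, F U /\ U y) -> (exists U, F U) ->
  (forall U V, F U -> F V -> exists W, F W /\ forall y, U y \/ V y -> W y) ->
  exists U, F U /\ forall y, C y -> U y.
Proof.
move=> cC oF cov [U0 FU0] dir.
have [l [Hl Hc]] := hc (fun U => F U \/ U = fun y => ~ C y)
  ltac:(by move=> U [/oF|->])
  ltac:(move=> y; case: (classic (C y)) => Cy;
    [have [U [FU Uy]] := cov y Cy; exists U; split; [left|]
    |exists (fun y => ~ C y); split; [right|]]; done).
suff [W [FW HW]] : exists W, F W /\ forall y U, C y -> In U l -> U y -> W y.
  by exists W; split => // y Cy; have [U [HU Uy]] := Hc y; exact: HW y U Cy HU Uy.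
elim: l Hl {Hc} => [|U l IH] Hl; first by exists U0; split => // y U _ [].
have [W [FW HW]] := IH (fun V HV => Hl V (or_intror HV)).
case: (Hl U (or_introl eq_refl)) => [FU|->]; last first.
  by exists W; split => // y V Cy [<-|HV] Vy; [case: Vy|exact: HW y V Cy HV Vy].
have [W' [FW' HW']] := dir U W FU FW.
exists W'; split => // y V Cy [<-|HV] Vy; apply: HW'; [left|right; exact: HW y V Cy HV Vy]; done.
Qed.

Lemma closed_directed_inter (hc : top_compact TY) (G : (Y -> Prop) -> Prop) :
  (forall S, G S -> TY (fun y => ~ S y)) -> (forall S, G S -> exists y, S y) ->
  (exists S, G S) ->
  (forall S1 S2, G S1 -> G S2 -> exists S, G S /\ forall y, S y -> S1 y /\ S2 y) ->
  exists y, forall S, G S -> S y.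
Proof.
move=> cG neG [S0 GS0] dir; apply: NNPP => nI.
have [U [[S [GS ->]] HU]] : exists U, (exists S, G S /\ U = fun y => ~ S y) /\
    forall y, True -> U y.
  apply: (compact_directed_cover hc); first by apply: (top_ext (top_False)); tauto.
  - by move=> U [S [GS ->]]; exact: cG.
  - move=> y _; apply: NNPP => ncov; apply: nI; exists y => S GS.
    by apply: NNPP => nSy; apply: ncov; exists (fun y => ~ S y); split => //; exists S.
  - by exists (fun y => ~ S0 y), S0.
  - move=> _ _ [S1 [GS1 ->]] [S2 [GS2 ->]]; have [S [GS HS]] := dir S1 S2 GS1 GS2.
    exists (fun y => ~ S y); split; first by exists S.
    by move=> y [nS1|nS2] Sy; have [] := HS y Sy; auto.
have [y Sy] := neG S GS.
exact: HU y I Sy.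
Qed.

End PredicateTopology.

Lemma image_closed {Z Y} (TZ : topology Z) (TY : topology Y) (hY : is_topology TY)
  (hc : top_compact TZ) (hh : top_hausdorff TY) (f : Z -> Y) (hf : continuous TZ TY f)
  (C : Z -> Prop) : TZ (fun z => ~ C z) -> TY (fun y => ~ exists z, C z /\ f z = y).
Proof.
move=> hC; apply: (top_local hY) => y ny.
pose separated U := exists V, TY U /\ TY V /\ V y /\ forall w, ~ (U w /\ V w).
have [W [[U [[V [oU [oV [Vy D]]]] ->]] HW]] :
    exists W, (exists U, separated U /\ W = fun z => U (f z)) /\ forall z, C z -> W z.
  apply: (compact_directed_cover hc C _ hC).
  - by move=> W [U [[V [oU _]] ->]]; exact: hf.
  - move=> z Cz; have nfz : f z <> y by move=> E; apply: ny; exists z.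
    have [U [V [oU [oV [Ufz [Vy D]]]]]] := hh _ _ nfz.
    by exists (fun z => U (f z)); split => //; exists U; split => //; exists V.
  - exists (fun _ => False), (fun _ => False); split => //.
    by exists (fun _ => True); split; [exact: top_False|split; [exact: top_True|split => // w []]].
  - move=> W1 W2 [U1 [[V1 [oU1 [oV1 [V1y D1]]]] ->]] [U2 [[V2 [oU2 [oV2 [V2y D2]]]] ->]].
    exists (fun z => U1 (f z) \/ U2 (f z)); split; last done.
    exists (fun w => U1 w \/ U2 w); split => //.
    exists (fun w => V1 w /\ V2 w); split; first exact: top_union2.
    split; first exact: top_inter.
    split => // w [[U1w|U2w] [V1w V2w]]; [exact: (D1 w)|exact: (D2 w)].
exists V; split => //; split => // y' Vy' [z [Cz E]]; subst y'.
exact: (D (f z) (conj (HW z Cz) Vy')).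
Qed.

Lemma prod_top_topology {A : Type} {Y : A -> Type} (T : forall a, topology (Y a)) :
  is_topology (prod_top T).
Proof.
split; first by move=> x _; exists nil; split => // q [].
split; first by move=> x [].
split.
  move=> U V HU HV x [Ux Vx].
  have [l1 [H1 S1]] := HU x Ux; have [l2 [H2 S2]] := HV x Vx.
  exists (l1 ++ l2); split; first by move=> q Hq; case: (in_app_or _ _ _ Hq); [exact: H1|exact: H2].
  by move=> y Hy; split; [apply: S1|apply: S2] => q Hq; apply: Hy; apply: in_or_app; auto.
move=> F HF x [U [FU Ux]]; have [l [Hl Hs]] := HF U FU x Ux.
by exists l; split => // y Hy; exists U; split => //; exact: Hs.
Qed.

Lemma lim_top_topology {A : Type} (le : A -> A -> Prop) (X : A -> Type)
  (p : forall a b, X b -> X a) (T : forall a, topology (X a)) :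
  is_topology (@lim_top A le X p T).
Proof.
have hP := prod_top_topology T.
split; first by exists (fun _ => True); split; [exact: (top_True hP)|].
split; first by exists (fun _ => False); split; [exact: (top_False hP)|].
split.
  move=> V W [U1 [o1 E1]] [U2 [o2 E2]].
  exists (fun z => U1 z /\ U2 z); split; first exact: (top_inter hP).
  by move=> x; rewrite E1 E2.
move=> F HF.
exists (fun z => exists U, (exists V, F V /\ prod_top T U /\
  forall x : Lim le X p, V x <-> U (proj1_sig x)) /\ U z); split.
  by apply: (top_union hP) => U [V [_ [oU _]]].
move=> x; split.
  move=> [V [FV Vx]]; have [U [oU E]] := HF V FV.
  by exists U; split; [exists V|apply/E].
by move=> [U [[V [FV [_ E]]] Ux]]; exists V; split; [|apply/E].
Qed.

Lemma Rmax_lip (a b c d : R) : Rabs (Rmax a b - Rmax c d) <= Rmax (Rabs (a - c)) (Rabs (b - d)).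
Proof. unfold Rmax, Rabs; repeat destruct Rcase_abs; repeat destruct Rle_dec; lra. Qed.

Lemma Rmin_lip (a b c d : R) : Rabs (Rmin a b - Rmin c d) <= Rmax (Rabs (a - c)) (Rabs (b - d)).
Proof. unfold Rmin, Rmax, Rabs; repeat destruct Rcase_abs; repeat destruct Rle_dec; lra. Qed.

Lemma Rabs_le_between (x e : R) : Rabs x <= e -> - e <= x <= e.
Proof. unfold Rabs; destruct Rcase_abs; lra. Qed.

Lemma eq_of_close (a b : R) : (forall e, 0 < e -> Rabs (a - b) <= 2 * e) -> a = b.
Proof.
move=> H; apply: NNPP => Hn.
have Hp : 0 < Rabs (a - b) by apply: Rabs_pos_lt; lra.
have := H (Rabs (a - b) / 4) ltac:(lra); lra.
Qed.

Lemma shift_lip (e x y : R) : Rabs ((x + e) - (y + e)) <= 1 * Rabs (x - y).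
Proof. replace (x + e - (y + e)) with (x - y) by ring; lra. Qed.

Lemma min_lip (c x y : R) : Rabs (Rmin c x - Rmin c y) <= 1 * Rabs (x - y).
Proof. unfold Rmin, Rabs; repeat destruct Rcase_abs; repeat destruct Rle_dec; lra. Qed.

Lemma affine_lip (lo k x y : R) : Rabs ((lo + k * x) - (lo + k * y)) <= Rabs k * Rabs (x - y).
Proof. replace (lo + k * x - (lo + k * y)) with (k * (x - y)) by ring; rewrite Rabs_mult; lra. Qed.

Lemma R_ball_open (c e : R) : R_top (fun r => Rabs (r - c) < e).
Proof.
move=> r Hr; exists (e - Rabs (r - c)); split; first lra.
move=> s Hs; have := Rabs_triang (s - r) (r - c).
replace (s - r + (r - c)) with (s - c) by ring; lra.
Qed.

Section RealFunctions.
Context {Y : Type} (TY : topology Y) (hT : is_topology TY).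

Lemma cont_lip (phi : Y -> R) (g : R -> R) (L : R) : 0 <= L ->
  (forall x y, Rabs (g x - g y) <= L * Rabs (x - y)) ->
  continuous TY R_top phi -> continuous TY R_top (fun y => g (phi y)).
Proof.
move=> hL hg hphi V HV; apply: (hphi (fun r => V (g r))) => x Vx.
have [e [he He]] := HV (g x) Vx.
exists (e / (L + 1)); split; first by apply: Rdiv_lt_0_compat; lra.
move=> y Hy; apply: He.
have E : e / (L + 1) * (L + 1) = e by field; lra.
have := hg y x; have := Rabs_pos (y - x); nra.
Qed.

Lemma cont_const (c : R) : continuous TY R_top (fun _ => c).
Proof. move=> V HV; exact: top_const. Qed.

Lemma open_lt (f g : Y -> R) : continuous TY R_top f -> continuous TY R_top g ->
  TY (fun y => f y < g y).
Proof.
move=> hf hg; apply: (top_local hT) => y Hy.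
set e := (g y - f y) / 2.
exists (fun z => Rabs (f z - f y) < e /\ Rabs (g z - g y) < e); split.
  apply: (top_inter hT); [exact: (hf _ (R_ball_open _ _))|exact: (hg _ (R_ball_open _ _))].
split; first by rewrite !Rminus_diag Rabs_R0; split; rewrite /e; lra.
move=> z [h1 h2]; move: h1 h2; rewrite /e; unfold Rabs; repeat destruct Rcase_abs; lra.
Qed.

Lemma cont_max (f g : Y -> R) : continuous TY R_top f -> continuous TY R_top g ->
  continuous TY R_top (fun y => Rmax (f y) (g y)).
Proof.
move=> hf hg V HV; apply: (top_local hT) => y Vy.
have [e [he He]] := HV _ Vy.
exists (fun z => Rabs (f z - f y) < e /\ Rabs (g z - g y) < e); split.
  apply: (top_inter hT); [exact: (hf _ (R_ball_open _ _))|exact: (hg _ (R_ball_open _ _))].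
split; first by rewrite !Rminus_diag Rabs_R0.
move=> z [h1 h2]; apply: He.
have := Rmax_lip (f z) (g z) (f y) (g y).
have := Rmax_lub_lt _ _ e h1 h2; lra.
Qed.

Lemma cont_bounded (hc : top_compact TY) (phi : Y -> R) : continuous TY R_top phi ->
  exists M, forall y, Rabs (phi y) <= M.
Proof.
move=> hphi.
have [W [[n ->] Hn]] : exists W, (exists n, W = fun y => Rabs (phi y - 0) < INR n) /\
    forall y, True -> W y.
  apply: (compact_directed_cover hc); first by apply: (top_ext (top_False hT)); tauto.
  - by move=> W [n ->]; apply: (hphi (fun r => Rabs (r - 0) < INR n)); exact: R_ball_open.
  - move=> y _; have [n Hn] := INR_unbounded (Rabs (phi y - 0)).
    by exists (fun y => Rabs (phi y - 0) < INR n); split; [exists n|lra].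
  - by exists (fun y => Rabs (phi y - 0) < INR 0); exists 0%nat.
  - move=> _ _ [m ->] [n ->]; exists (fun y => Rabs (phi y - 0) < INR (Nat.max m n)).
    split; first by exists (Nat.max m n).
    move=> y; have := le_INR _ _ (Nat.le_max_l m n); have := le_INR _ _ (Nat.le_max_r m n); lra.
exists (INR n) => y; have := Hn y I; rewrite Rminus_0_r; lra.
Qed.

End RealFunctions.

(* A continuous piecewise-linear "ramp" which stays below the identity up to
   the level [c], and lies [e] above it from [c + d] on. *)
Definition ramp (c d e r : R) : R := Rmin (r + e) (c + (1 + e / d) * (r - c)).

Section Ramp.
Variables (c d e : R).
Hypotheses (hd : 0 < d) (he : 0 <= e).

Lemma ramp_lip (x y : R) : Rabs (ramp c d e x - ramp c d e y) <= (1 + e / d) * Rabs (x - y).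
Proof.
have hk : 0 <= e / d by apply: Rmult_le_pos; [|left; apply: Rinv_0_lt_compat]; lra.
apply: Rle_trans (Rmin_lip _ _ _ _) _; apply: Rmax_lub.
  replace (x + e - (y + e)) with (x - y) by ring; have := Rabs_pos (x - y); nra.
replace (c + (1 + e / d) * (x - c) - (c + (1 + e / d) * (y - c))) with ((1 + e / d) * (x - y)) by ring.
by rewrite Rabs_mult Rabs_pos_eq; lra.
Qed.

Lemma ramp_low (r : R) : Rmin c (ramp c d e r) <= r.
Proof.
case: (Rle_dec r c) => hr; last by have := Rmin_l c (ramp c d e r); lra.
have hk : 0 <= e / d by apply: Rmult_le_pos; [|left; apply: Rinv_0_lt_compat]; lra.
have := Rmin_r c (ramp c d e r); have := Rmin_r (r + e) (c + (1 + e / d) * (r - c)).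
rewrite /ramp; nra.
Qed.

Lemma ramp_high (r : R) : c + d <= r -> r + e <= ramp c d e r.
Proof.
move=> hr; apply: Rmin_glb; first lra.
have E : (1 + e / d) * (r - c) = (r - c) + e * ((r - c) / d) by field; lra.
have Et : r - c = (r - c) / d * d by field; lra.
rewrite E; move: Et; set t := (r - c) / d => Et.
have : 1 <= t by nra.
nra.
Qed.

End Ramp.

Section MaxMin.
Context {Y : Type} (TY : topology Y) (hT : is_topology TY).

Definition cfmk (f : Y -> R) (h : continuous TY R_top f) : CF TY := exist _ f h.

Lemma cf_cont (phi : CF TY) : continuous TY R_top (proj1_sig phi).
Proof. exact: proj2_sig phi. Qed.

Definition cf_const (c : R) : CF TY := cfmk (fun _ => c) (cont_const TY hT c).

Definition cf_shift (phi : CF TY) (e : R) : CF TY :=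
  cfmk (fun y => proj1_sig phi y + e)
    (cont_lip TY _ (fun r => r + e) 1 ltac:(lra) (shift_lip e) (cf_cont phi)).

Definition cf_min (c : R) (phi : CF TY) : CF TY :=
  cfmk (fun y => Rmin c (proj1_sig phi y))
    (cont_lip TY _ (Rmin c) 1 ltac:(lra) (min_lip c) (cf_cont phi)).

Definition cf_max (phi psi : CF TY) : CF TY :=
  cfmk (fun y => Rmax (proj1_sig phi y) (proj1_sig psi y))
    (cont_max TY hT _ _ (cf_cont phi) (cf_cont psi)).

Variable mu : CF TY -> R.
Hypothesis hmu : maxmin TY mu.

Lemma mm_const (phi : CF TY) (c : R) : (forall y, proj1_sig phi y = c) -> mu phi = c.
Proof. by case: hmu => H _; apply: H. Qed.

Lemma mm_max (phi psi chi : CF TY) :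
  (forall x, proj1_sig chi x = Rmax (proj1_sig phi x) (proj1_sig psi x)) ->
  mu chi = Rmax (mu phi) (mu psi).
Proof. by case: hmu => _ [H _]; apply: H. Qed.

Lemma mm_min (c : R) (phi chi : CF TY) :
  (forall x, proj1_sig chi x = Rmin c (proj1_sig phi x)) -> mu chi = Rmin c (mu phi).
Proof. by case: hmu => _ [_ H]; apply: H. Qed.

Lemma mm_ext (phi psi : CF TY) : (forall y, proj1_sig phi y = proj1_sig psi y) -> mu phi = mu psi.
Proof.
move=> H; rewrite (mm_max phi phi psi); first by rewrite Rmax_left; lra.
by move=> x; rewrite H Rmax_left; lra.
Qed.

Lemma mm_mono (phi psi : CF TY) : (forall y, proj1_sig phi y <= proj1_sig psi y) -> mu phi <= mu psi.
Proof.
move=> H; rewrite (mm_max phi psi psi); first exact: Rmax_l.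
by move=> x; rewrite Rmax_right //; exact: H.
Qed.

(* Writing [a = mu psi] and [c = a + d], the ramp
   [T = ramp c d e o psi] satisfies [min c T <= psi], whence [mu T <= a], and
   [phi <= max T (c + d + e)], whence [mu phi <= a + e + 2 d]. *)
Lemma mm_nonexpansive (phi psi : CF TY) (e : R) : 0 <= e ->
  (forall y, proj1_sig phi y <= proj1_sig psi y + e) -> mu phi <= mu psi + e.
Proof.
move=> he H; apply: Rle_plus_epsilon => eps heps.
set a := mu psi; set d := eps / 2; set c := a + d.
have hd : 0 < d by rewrite /d; lra.
have hk : 0 <= 1 + e / d by have := Rmult_le_pos e (/ d) he (Rlt_le _ _ (Rinv_0_lt_compat d hd)); lra.
pose T := cfmk (fun y => ramp c d e (proj1_sig psi y))
  (cont_lip TY _ (ramp c d e) _ hk (ramp_lip c d e hd he) (cf_cont psi)).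
have muT : mu T <= a.
  have H1 : mu (cf_min c T) = Rmin c (mu T) by apply: mm_min.
  have H2 : mu (cf_min c T) <= a by apply: mm_mono => y; exact: ramp_low.
  move: H1 H2; unfold Rmin; destruct Rle_dec; rewrite /c; lra.
have H3 : mu (cf_max T (cf_const (c + d + e))) = Rmax (mu T) (c + d + e).
  by rewrite (mm_max T (cf_const (c + d + e))) // (mm_const (cf_const _) (c + d + e)).
have H4 : mu phi <= mu (cf_max T (cf_const (c + d + e))).
  apply: mm_mono => y /=; apply: Rle_trans (H y) _.
  case: (Rle_dec (c + d) (proj1_sig psi y)) => hy.
    exact: Rle_trans (ramp_high c d e hd he _ hy) (Rmax_l _ _).
  apply: Rle_trans (Rmax_r _ _); lra.
have := Rmax_lub (mu T) (c + d + e) (c + d + e) ltac:(rewrite /c; lra) (Rle_refl _).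
rewrite /c /d in H3 H4 *; lra.
Qed.

Lemma mm_close (phi psi : CF TY) (e : R) : 0 <= e ->
  (forall y, Rabs (proj1_sig phi y - proj1_sig psi y) <= e) -> Rabs (mu phi - mu psi) <= e.
Proof.
move=> he H; apply: Rabs_le; split.
  suff : mu psi <= mu phi + e by lra.
  by apply: mm_nonexpansive => // y; have := Rabs_le_between _ _ (H y); lra.
suff : mu phi <= mu psi + e by lra.
by apply: mm_nonexpansive => // y; have := Rabs_le_between _ _ (H y); lra.
Qed.

End MaxMin.

Lemma ptw_ball_open {Y : Type} (TY : topology Y) (phi : CF TY) (r e : R) :
  ptw_top TY (fun nu => Rabs (nu phi - r) < e).
Proof.
move=> nu Hnu; exists (phi :: nil), (e - Rabs (nu phi - r)); split; first lra.
move=> nu' Hnu'; have := Hnu' phi (or_introl eq_refl).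
have := Rabs_triang (nu' phi - nu phi) (nu phi - r).
replace (nu' phi - nu phi + (nu phi - r)) with (nu' phi - r) by ring; lra.
Qed.

Section InverseLimit.
Variables (A : Type) (le : A -> A -> Prop) (X : A -> Type) (T : forall a, topology (X a))
  (p : forall a b, X b -> X a).
Hypothesis hdir : directed le.
Hypothesis htop : forall a, is_topology (T a).
Hypothesis hcomp : forall a, top_compact (T a).
Hypothesis hhaus : forall a, top_hausdorff (T a).
Hypothesis pc : forall a b, le a b -> continuous (T b) (T a) (p a b).
Hypothesis hsys : inv_system le X p.

Local Notation L := (@Lim A le X p).
Local Notation TL := (@lim_top A le X p T).

Lemma le_refl a : le a a. Proof. by case: hdir. Qed.
Lemma le_trans' {a b c} : le a b -> le b c -> le a c. Proof. by case: hdir => _ [H _]; apply: H. Qed.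
Lemma le_ub a b : exists c, le a c /\ le b c. Proof. by case: hdir => _ [_ H]. Qed.
Lemma p_id a x : p a a x = x. Proof. by case: hsys. Qed.
Lemma p_comp a b c x : le a b -> le b c -> p a b (p b c x) = p a c x.
Proof. by case: hsys => _ H; apply: H. Qed.
Lemma thread (x : L) a b : le a b -> p a b (proj1_sig x b) = proj1_sig x a.
Proof. exact: (proj2_sig x a b). Qed.

Lemma ub_list (a0 : A) (l : list A) : exists c, le a0 c /\ forall a, In a l -> le a c.
Proof.
elim: l => [|a l [c [h0 hc]]]; first by exists a0; split => //; apply: le_refl.
have [d [h1 h2]] := le_ub a c.
exists d; split; first exact: le_trans' h0 h2.
by move=> b [<-|Hb]; [|exact: le_trans' (hc b Hb) h2].
Qed.

Definition pull a b (hab : le a b) (psi : CF (T a)) : CF (T b) :=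
  exist _ _ (cont_comp_CF (T b) (T a) (p a b) (pc a b hab) psi).

Definition lift a (psi : CF (T a)) : CF TL :=
  exist _ _ (cont_comp_CF TL (T a) _ (lim_proj_cont le X p T a) psi).

(* Existence of threads: a compatible family of nonempty closed subsets of the
   spaces [X b] contains a thread.  This is the nonemptiness of inverse limits
   of nonempty compacta, proved by Zorn's lemma: a minimal compatible family
   consists of singletons. *)
Definition closed_in b (S : X b -> Prop) := T b (fun y => ~ S y).
Definition compatible (Y : forall b, X b -> Prop) :=
  forall b c y, le b c -> Y c y -> Y b (p b c y).

Section StableImages.
Variables (a0 : A) (Q : forall c, X c -> Prop).
Hypothesis Qcl : forall c, le a0 c -> closed_in c (Q c).
Hypothesis Qsub : forall c c' w, le a0 c -> le c c' -> Q c' w -> Q c (p c c' w).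
Hypothesis Qne : forall c, le a0 c -> exists w, Q c w.

Definition image_at b c z := exists w, Q c w /\ p b c w = z.
Definition imgs b z := forall c, le a0 c -> le b c -> image_at b c z.

Lemma image_at_closed b c : le a0 c -> le b c -> closed_in b (image_at b c).
Proof. by move=> h0 h1; apply: image_closed; [exact: htop|exact: hcomp|exact: hhaus|exact: pc|exact: Qcl]. Qed.

Lemma imgs_closed b : closed_in b (imgs b).
Proof.
apply: (top_ext (closed_forall (htop b) _ (fun c => le a0 c /\ le b c) (image_at b)
  ltac:(by move=> c [h0 h1]; exact: image_at_closed))) => z /=; firstorder.
Qed.

Lemma imgs_ne b : exists z, imgs b z.
Proof.
pose G S := exists c, le a0 c /\ le b c /\ S = image_at b c.
suff [z Hz] : exists z, forall S, G S -> S z by exists z => c h0 h1; apply: Hz; exists c.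
apply: (closed_directed_inter (htop b) (hcomp b)).
- by move=> S [c [h0 [h1 ->]]]; exact: image_at_closed.
- move=> S [c [h0 [h1 ->]]]; have [w Qw] := Qne c h0.
  by exists (p b c w), w.
- by have [c [h0 h1]] := le_ub a0 b; exists (image_at b c), c.
- move=> _ _ [c1 [h01 [h1 ->]]] [c2 [h02 [h2 ->]]].
  have [e [he1 he2]] := le_ub c1 c2.
  exists (image_at b e); split; first by exists e; split; [exact: le_trans' h01 he1|split; [exact: le_trans' h1 he1|]].
  move=> y [w [Qw <-]]; split.
    by exists (p c1 e w); split; [exact: Qsub|exact: p_comp].
  by exists (p c2 e w); split; [exact: Qsub|exact: p_comp].
Qed.

Lemma imgs_compatible : compatible imgs.
Proof.
move=> b c y hbc Hy c' h0 hbc'.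
have [e [hce hc'e]] := le_ub c c'.
have [w [Qw Ew]] := Hy e (le_trans' h0 hc'e) hce.
exists (p c' e w); split; first exact: Qsub.
rewrite p_comp // -Ew p_comp //; exact: le_trans' hbc' hc'e.
Qed.

Lemma imgs_below (Z : forall b, X b -> Prop) : compatible Z ->
  (forall c w, le a0 c -> Q c w -> Z c w) -> forall b z, imgs b z -> Z b z.
Proof.
move=> HZ QZ b z Hz; have [c [h0 h1]] := le_ub a0 b.
have [w [Qw <-]] := Hz c h0 h1; exact: HZ _ _ _ h1 (QZ c w h0 Qw).
Qed.

End StableImages.

Section Threads.
Variable Y0 : forall b, X b -> Prop.
Hypothesis Y0cl : forall b, closed_in b (Y0 b).
Hypothesis Y0ne : forall b, exists z, Y0 b z.
Hypothesis Y0comp : compatible Y0.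

Definition good (Y : forall b, X b -> Prop) :=
  (forall b, closed_in b (Y b)) /\ (forall b, exists z, Y b z) /\ compatible Y /\
  (forall b z, Y b z -> Y0 b z).

Definition subfamily (Y Z : forall b, X b -> Prop) := forall b z, Y b z -> Z b z.

Lemma imgs_good a0 (Q : forall c, X c -> Prop) :
  (forall c, le a0 c -> closed_in c (Q c)) ->
  (forall c c' w, le a0 c -> le c c' -> Q c' w -> Q c (p c c' w)) ->
  (forall c, le a0 c -> exists w, Q c w) ->
  (forall c w, le a0 c -> Q c w -> Y0 c w) -> good (imgs a0 Q).
Proof.
move=> Qcl Qsub Qne QY0; split; first exact: imgs_closed.
split; first exact: imgs_ne.
split; first exact: imgs_compatible.
exact: imgs_below.
Qed.

Lemma chain_inter_good (C : (forall b, X b -> Prop) -> Prop) :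
  (forall Y, C Y -> good Y) ->
  (forall Y Z, C Y -> C Z -> subfamily Y Z \/ subfamily Z Y) ->
  good (fun b z => Y0 b z /\ forall Y, C Y -> Y b z).
Proof.
move=> gC chain; split.
  move=> b; apply: (closed_and (htop b) _ _ (Y0cl b)).
  by apply: (closed_forall (htop b)) => Y CY; case: (gC Y CY) => H _; exact: H.
split.
  move=> b; pose G S := S = Y0 b \/ exists Y, C Y /\ S = Y b.
  have [z Hz] : exists z, forall S, G S -> S z.
    apply: (closed_directed_inter (htop b) (hcomp b)).
    - by move=> S [->|[Y [CY ->]]]; [exact: Y0cl|case: (gC Y CY) => H _; exact: H].
    - by move=> S [->|[Y [CY ->]]]; [exact: Y0ne|case: (gC Y CY) => _ [H _]; exact: H].
    - by exists (Y0 b); left.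
    - have inY0 : forall Y, C Y -> forall z, Y b z -> Y0 b z.
        by move=> Y CY; case: (gC Y CY) => _ [_ [_ H]]; exact: H.
      move=> _ _ [->|[Y [CY ->]]] [->|[Z [CZ ->]]].
      + by exists (Y0 b); split; [left|].
      + by exists (Z b); split; [right; exists Z|move=> z Zz; split; [exact: inY0 CZ z Zz|]].
      + by exists (Y b); split; [right; exists Y|move=> z Yz; split; [|exact: inY0 CY z Yz]].
      + case: (chain Y Z CY CZ) => HYZ.
          by exists (Y b); split; [right; exists Y|move=> z Yz; split; [|exact: HYZ]].
        by exists (Z b); split; [right; exists Z|move=> z Zz; split; [exact: HYZ|]].
  by exists z; split; [apply: Hz; left|move=> Y CY; apply: Hz; right; exists Y].
split; last by move=> b z [].
move=> b c y hbc [Y0y HY]; split; first exact: Y0comp.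
by move=> Y CY; case: (gC Y CY) => _ [_ [H _]]; apply: H; [|exact: HY].
Qed.

Lemma minimal_good : exists Yt, good Yt /\
  forall Z, good Z -> subfamily Z Yt -> subfamily Yt Z.
Proof.
have g0 : good Y0 by split => //; split => //; split.
pose GS := {Y | good Y}.
pose Rl (s t : GS) := subfamily (proj1_sig t) (proj1_sig s).
have chain_ub : forall C : GS -> Prop, (forall s t, C s -> C t -> Rl s t \/ Rl t s) ->
    exists t, forall s, C s -> Rl s t.
  move=> C HC; pose CY Y := exists s, C s /\ proj1_sig s = Y.
  have gI := chain_inter_good CY ltac:(by move=> Y [s [_ <-]]; exact: proj2_sig s)
    ltac:(by move=> Y Z [s [Cs <-]] [t [Ct <-]]; case: (HC s t Cs Ct); auto).
  by exists (exist _ _ gI) => s Cs b z /= [_ Hz]; apply: Hz; exists s.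
have [[Yt gYt] Ht] := AnalysisBridge.zorn GS (exist _ Y0 g0) Rl
  ltac:(by move=> s b z) ltac:(by move=> r s t H1 H2 b z Hz; apply: H1; apply: H2) chain_ub.
by exists Yt; split => // Z gZ HZ; exact: (Ht (exist _ Z gZ) HZ).
Qed.

Lemma minimal_good_singleton (Yt : forall b, X b -> Prop) : good Yt ->
  (forall Z, good Z -> subfamily Z Yt -> subfamily Yt Z) ->
  forall b0 y0 z, Yt b0 y0 -> Yt b0 z -> z = y0.
Proof.
move=> [Ycl [Yne [Ycomp YY0]]] Hmin b0 y0 z Hy0 Hz.
have stable : subfamily Yt (imgs b0 Yt).
  apply: Hmin; last exact: imgs_below.
  by apply: imgs_good => [c _|c c' w _|c _|c w _]; [exact: Ycl|exact: Ycomp|exact: Yne|exact: YY0].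
pose Q c w := Yt c w /\ p b0 c w = y0.
have Qcl : forall c, le b0 c -> closed_in c (Q c).
  move=> c hc; apply: closed_and; [exact: htop|exact: Ycl|].
  apply: (top_ext (pc b0 c hc _ (point_complement_open (htop b0) (hhaus b0) y0))) => w.
  by split => H1 H2; exact: H1 H2.
have Qsub : forall c c' w, le b0 c -> le c c' -> Q c' w -> Q c (p c c' w).
  by move=> c c' w h0 h1 [Yw Ew]; split; [exact: Ycomp|rewrite p_comp].
have Qne : forall c, le b0 c -> exists w, Q c w.
  by move=> c hc; have [w [Yw Ew]] := stable b0 y0 Hy0 c hc hc; exists w.
have HQ : subfamily Yt (imgs b0 Q).
  apply: Hmin; last by apply: imgs_below => // c w _ [].
  by apply: imgs_good => // c w _ [Yw _]; exact: YY0.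
have [w [[_ E1] E2]] := HQ b0 z Hz b0 (le_refl b0) (le_refl b0).
by rewrite -E2 -E1.
Qed.

Lemma thread_exists : exists x : L, forall b, Y0 b (proj1_sig x b).
Proof.
have [Yt [gYt Hmin]] := minimal_good.
have [_ [Yne [Ycomp YY0]]] := gYt.
pose x b := proj1_sig (constructive_indefinite_description _ (Yne b)).
have xY : forall b, Yt b (x b) by move=> b; exact: proj2_sig (constructive_indefinite_description _ (Yne b)).
have xthr : forall a b, le a b -> p a b (x b) = x a.
  by move=> a b hab; apply: (minimal_good_singleton Yt gYt Hmin a); [exact: xY|exact: Ycomp].
by exists (exist _ x xthr) => b; apply: YY0; exact: xY.
Qed.

End Threads.

(* [p_a(X) = \bigcap_{b >= a} p a b (X_b)]: a closed set of [X_a] missing the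
   image of the limit already misses the image of some [X_b]. *)
Lemma limit_image_avoid (a : A) (K : X a -> Prop) : closed_in a K ->
  (forall x : L, ~ K (proj1_sig x a)) -> exists b, le a b /\ forall w, ~ K (p a b w).
Proof.
move=> hK Hx; apply: NNPP => Hn.
pose Q c w := K (p a c w).
have Qcl : forall c, le a c -> closed_in c (Q c) by move=> c hc; exact: (pc a c hc _ hK).
have Qsub : forall c c' w, le a c -> le c c' -> Q c' w -> Q c (p c c' w).
  by move=> c c' w h0 h1; rewrite /Q p_comp.
have Qne : forall c, le a c -> exists w, Q c w.
  move=> c hac; apply: NNPP => H; apply: Hn; exists c; split => // w Kw; apply: H; by exists w.
have [x Hx'] := thread_exists (imgs a Q) (imgs_closed a Q Qcl Qsub)
  (imgs_ne a Q Qcl Qsub Qne) (imgs_compatible a Q Qsub).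
have [w [Qw Ew]] := Hx' a a (le_refl a) (le_refl a).
by apply: (Hx x); rewrite -Ew; move: Qw; rewrite /Q p_id.
Qed.

Section ZeroDim.
Variable a0 : A.
Hypothesis hXc : top_compact TL.
Hypothesis hX0 : zero_dim TL.

Lemma basic_nbhd (V : L -> Prop) : TL V -> forall x : L, V x ->
  exists c (O : X c -> Prop), T c O /\ O (proj1_sig x c) /\ forall y : L, O (proj1_sig y c) -> V y.
Proof.
move=> [U [hU HV]] x Vx.
have [l [Hl Hs]] := hU _ (proj1 (HV x) Vx).
have [c [_ hc]] := ub_list a0 (map (@projT1 _ _) l).
have hq : forall q, In q l -> le (projT1 q) c by move=> q Hq; apply: hc; apply: in_map.
exists c, (fun z => forall q, In q l -> projT2 q (p (projT1 q) c z)); split.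
  apply: (top_forall_fin (htop c)) => q Hq.
  exact: (pc _ _ (hq q Hq) _ (proj1 (Hl q Hq))).
split; first by move=> q Hq; rewrite thread; [exact: (proj2 (Hl q Hq))|exact: hq].
move=> y Hy; apply/HV; apply: Hs => q Hq.
by rewrite -(thread y (projT1 q) c (hq q Hq)); apply: Hy.
Qed.

Lemma clopen_factor (W : L -> Prop) : clopen TL W ->
  exists c (O : X c -> Prop), forall x : L, W x <-> O (proj1_sig x c).
Proof.
move=> [oW cW].
have [U [[c [O [hO [HO ->]]]] HU]] : exists U, (exists c (O : X c -> Prop), T c O /\
    (forall y : L, O (proj1_sig y c) -> W y) /\ U = fun y => O (proj1_sig y c)) /\
    forall y, W y -> U y.
  apply: (compact_directed_cover hXc W _ cW).
  - by move=> U [c [O [hO [_ ->]]]]; exact: (lim_proj_cont le X p T c O hO).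
  - move=> y Wy; have [c [O [hO [Oy HO]]]] := basic_nbhd W oW y Wy.
    by exists (fun y => O (proj1_sig y c)); split => //; exists c, O.
  - by exists (fun _ => False), a0, (fun _ => False); split; [exact: top_False|].
  - move=> _ _ [c1 [O1 [hO1 [H1 ->]]]] [c2 [O2 [hO2 [H2 ->]]]].
    have [e [h1 h2]] := le_ub c1 c2.
    exists (fun y : L => O1 (p c1 e (proj1_sig y e)) \/ O2 (p c2 e (proj1_sig y e))).
    split; last by move=> y; rewrite !thread.
    exists e, (fun z => O1 (p c1 e z) \/ O2 (p c2 e z)); split.
      by apply: (top_union2 (htop e)); [exact: (pc _ _ h1 _ hO1)|exact: (pc _ _ h2 _ hO2)].
    by split => // y; rewrite !thread //; case; [apply: H1|apply: H2].
by exists c, O => x; split; [exact: HU|exact: HO].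
Qed.

Lemma clopen_indicator (W : L -> Prop) : clopen TL W ->
  exists c (u : X c -> R), continuous (T c) R_top u /\
    forall x : L, (W x -> u (proj1_sig x c) = 1) /\ (~ W x -> u (proj1_sig x c) = 0).
Proof.
move=> [oW cW]; have [c [O HO]] := clopen_factor W (conj oW cW).
have cnW : TL (fun y => ~ ~ W y) by apply: (top_ext oW) => y; split => [Wy|/NNPP].
have img_closed : forall C : L -> Prop, TL (fun y => ~ C y) ->
    T c (fun v => ~ exists y, C y /\ proj1_sig y c = v).
  by move=> C; apply: image_closed; [exact: htop|exact: hXc|exact: hhaus|exact: lim_proj_cont].
have [u [cu [u1 u0]]] := AnalysisBridge.urysohn (X c) (T c) (htop c) (hcomp c) (hhaus c)
  (fun v => exists y, W y /\ proj1_sig y c = v) (fun v => exists y, ~ W y /\ proj1_sig y c = v)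
  (img_closed W cW) (img_closed (fun y => ~ W y) cnW)
  ltac:(by move=> v [y [Wy <-]] [y' [nWy' E]]; apply: nWy'; apply/HO; rewrite E; apply/HO).
by exists c, u; split => // x; split => Wx; [apply: u1|apply: u0]; exists x.
Qed.

(* Near any point, a continuous [phi] on the limit has a lower approximant
   [psi o p_c <= phi] which is above [phi - eps] at that point: a two-valued
   step function built from a small clopen neighbourhood. *)
Lemma local_lower_approx (phi : CF TL) (eps M : R) : 0 < eps ->
  (forall y, Rabs (proj1_sig phi y) <= M) -> forall x : L,
  exists c (psi : CF (T c)), (forall y : L, proj1_sig psi (proj1_sig y c) <= proj1_sig phi y) /\
    proj1_sig phi x - eps < proj1_sig psi (proj1_sig x c).
Proof.
move=> he HM x.
have [W [cW [Wx WB]]] := hX0 _ x (cf_cont TL phi _ (R_ball_open (proj1_sig phi x) (eps / 2)))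
  ltac:(by rewrite /= Rminus_diag Rabs_R0; lra).
have [c [u [cu Hu]]] := clopen_indicator W cW.
set v := proj1_sig phi x - eps / 2.
pose psi := cfmk (T c) (fun z => - M + (v + M) * u z)
  (cont_lip (T c) u _ _ (Rabs_pos (v + M)) (affine_lip (- M) (v + M)) cu).
exists c, psi; split => [y|] /=; last by rewrite (proj1 (Hu x) Wx) /v; lra.
case: (classic (W y)) => Wy.
  by rewrite (proj1 (Hu y) Wy); move: (WB y Wy); rewrite /v /=; unfold Rabs; destruct Rcase_abs; lra.
by rewrite (proj2 (Hu y) Wy); have := HM y; unfold Rabs; destruct Rcase_abs; lra.
Qed.

(* Every continuous function on the limit is a uniform limit of functions
   [psi o p_c]: lower approximants are closed under [max] at a common index, so
   by compactness a single one is above [phi - eps] everywhere. *)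
Lemma approx (phi : CF TL) (eps : R) : 0 < eps ->
  exists c (psi : CF (T c)), forall x : L,
    Rabs (proj1_sig psi (proj1_sig x c) - proj1_sig phi x) <= eps.
Proof.
move=> he; have hTL := lim_top_topology le X p T.
have [M HM] := cont_bounded TL hTL hXc _ (cf_cont TL phi).
pose lower c (psi : CF (T c)) := forall y : L, proj1_sig psi (proj1_sig y c) <= proj1_sig phi y.
pose above c (psi : CF (T c)) (y : L) := proj1_sig phi y - eps < proj1_sig psi (proj1_sig y c).
have [U [[c [psi [Hlow ->]]] HU]] :
    exists U, (exists c psi, lower c psi /\ U = above c psi) /\ forall y, True -> U y.
  apply: (compact_directed_cover hXc); first by apply: (top_ext (top_False hTL)); tauto.
  - move=> U [c [psi [_ ->]]]; apply: (open_lt TL hTL); last exact: cf_cont TL (lift c psi).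
    exact: (cont_lip TL _ (fun r => r + - eps) 1 ltac:(lra) (shift_lip _) (cf_cont TL phi)).
  - move=> x _; have [c [psi [H1 H2]]] := local_lower_approx phi eps M he HM x.
    by exists (above c psi); split => //; exists c, psi.
  - exists (above a0 (cf_const (T a0) (htop a0) (- M))), a0, (cf_const (T a0) (htop a0) (- M)).
    by split => // y /=; have := HM y; unfold Rabs; destruct Rcase_abs; lra.
  - move=> _ _ [c1 [psi1 [H1 ->]]] [c2 [psi2 [H2 ->]]].
    have [e [h1 h2]] := le_ub c1 c2.
    pose psi := cf_max (T e) (htop e) (pull c1 e h1 psi1) (pull c2 e h2 psi2).
    exists (above e psi); split; first by exists e, psi; split => // y /=;
      rewrite !thread //; apply: Rmax_lub; [exact: H1|exact: H2].
    move=> y; rewrite /above /= !thread //.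
    by case=> H; [apply: Rlt_le_trans (Rmax_l _ _)|apply: Rlt_le_trans (Rmax_r _ _)].
exists c, psi => y; have := HU y I; have := Hlow y; rewrite /above; unfold Rabs; destruct Rcase_abs; lra.
Qed.

End ZeroDim.

Section ThreadMeasures.
Variable m : forall a, CF (T a) -> R.
Hypothesis hm : limJ le X p T pc m.

Lemma m_maxmin a : maxmin (T a) (m a). Proof. by case: hm. Qed.

Lemma m_pull a b (hab : le a b) (psi : CF (T a)) : m b (pull a b hab psi) = m a psi.
Proof. by case: hm => _ Hj; rewrite -(Hj a b hab). Qed.

(* If [psi <= psi' + e] on [p_c(X)] then [m_c psi <= m_c psi' + e]: the
   inequality holds up to any [d > 0] on some [p c b (X_b)]. *)
Lemma m_supp c (psi psi' : CF (T c)) (e : R) : 0 <= e ->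
  (forall x : L, proj1_sig psi (proj1_sig x c) <= proj1_sig psi' (proj1_sig x c) + e) ->
  m c psi <= m c psi' + e.
Proof.
move=> he H; apply: Rle_plus_epsilon => d hd.
have hK : closed_in c (fun v => proj1_sig psi' v + (e + d) <= proj1_sig psi v).
  apply: (top_ext (open_lt (T c) (htop c) _ _ (cf_cont _ psi)
    (cont_lip (T c) _ _ 1 ltac:(lra) (shift_lip (e + d)) (cf_cont _ psi')))) => v /=.
  by split => [? ?|/Rnot_le_lt]; lra.
have [b [hcb Hb]] := limit_image_avoid c _ hK ltac:(by move=> x Kx; have := H x; lra).
rewrite -(m_pull c b hcb psi) -(m_pull c b hcb psi') Rplus_assoc.
apply: (mm_nonexpansive (T b) (htop b) (m b) (m_maxmin b)); first lra.
by move=> w /=; have := Hb w; move/Rnot_le_lt; lra.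
Qed.

Lemma m_compare c1 (psi1 : CF (T c1)) c2 (psi2 : CF (T c2)) (e : R) : 0 <= e ->
  (forall x : L, proj1_sig psi1 (proj1_sig x c1) <= proj1_sig psi2 (proj1_sig x c2) + e) ->
  m c1 psi1 <= m c2 psi2 + e.
Proof.
move=> he H; have [d [h1 h2]] := le_ub c1 c2.
rewrite -(m_pull c1 d h1 psi1) -(m_pull c2 d h2 psi2).
by apply: m_supp => // x /=; rewrite !thread.
Qed.

End ThreadMeasures.

(* The inverse of [h]: [g m phi = sup {m_c psi | psi o p_c <= phi}]. *)
Definition lub (E : R -> Prop) : R := epsilon (inhabits 0) (fun r => is_lub E r).

Lemma lub_spec E : bound E -> (exists r, E r) -> is_lub E (lub E).
Proof.
move=> hb he; rewrite /lub; apply: epsilon_spec.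
by case: (completeness E hb he) => r Hr; exists r.
Qed.

Definition lower_values (m : forall a, CF (T a) -> R) (phi : CF TL) (r : R) :=
  exists c (psi : CF (T c)),
    (forall x : L, proj1_sig psi (proj1_sig x c) <= proj1_sig phi x) /\ r = m c psi.

Definition g (m : forall a, CF (T a) -> R) (phi : CF TL) : R := lub (lower_values m phi).

Lemma g_approx m (hm : limJ le X p T pc m) (phi : CF TL) c (psi : CF (T c)) (e : R) : 0 <= e ->
  (forall x : L, Rabs (proj1_sig psi (proj1_sig x c) - proj1_sig phi x) <= e) ->
  Rabs (g m phi - m c psi) <= e.
Proof.
move=> he H.
have low : lower_values m phi (m c (cf_shift (T c) psi (- e))).
  by exists c, (cf_shift (T c) psi (- e)); split => // x /=; have := Rabs_le_between _ _ (H x); lra.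
have ub : forall r, lower_values m phi r -> r <= m c psi + e.
  move=> r [c1 [psi1 [H1 ->]]]; apply: (m_compare m hm c1 psi1 c psi e he) => x.
  by have := H1 x; have := Rabs_le_between _ _ (H x); lra.
have [Hub Hleast] := lub_spec (lower_values m phi)
  ltac:(by exists (m c psi + e)) ltac:(by eexists; exact: low).
have := Hub _ low; have := Hleast _ ub.
have := mm_nonexpansive (T c) (htop c) (m c) (m_maxmin m hm c) psi (cf_shift (T c) psi (- e)) e he
  ltac:(by move=> w /=; lra).
by rewrite /g => *; apply: Rabs_le; lra.
Qed.

Lemma h_maxmin (mu : CF TL -> R) : maxmin TL mu -> limJ le X p T pc (hJ le X p T mu).
Proof.
move=> hmu; split.
  move=> a; split; first by move=> c psi Hpsi; apply: (mm_const TL mu hmu) => x /=; apply: Hpsi.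
  split; first by move=> psi1 psi2 chi Hchi; apply: (mm_max TL mu hmu) => x /=; apply: Hchi.
  by move=> c psi chi Hchi; apply: (mm_min TL mu hmu) => x /=; apply: Hchi.
move=> a b hab; apply: functional_extensionality => psi.
by apply: (mm_ext TL mu hmu) => x /=; rewrite /lim_proj thread.
Qed.

(* [h] is continuous: its coordinates [nu |-> nu (psi o p_a)] are evaluations. *)
Lemma h_cont : continuous (ptw_top TL) (prod_top (fun a => ptw_top (T a))) (hJ le X p T).
Proof.
move=> V hV mu Hmu.
have [lq [Hq Hs]] := hV _ Hmu.
suff [l [e [he Hl]]] : exists (l : list (CF TL)) (e : R), 0 < e /\ forall nu : CF TL -> R,
    (forall phi, In phi l -> Rabs (nu phi - mu phi) < e) ->
    forall q, In q lq -> projT2 q (hJ le X p T nu (projT1 q)).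
  by exists l, e; split => // nu Hnu; apply: Hs; apply: Hl.
elim: lq Hq {Hs} => [|q lq IH] Hq; first by exists nil, 1; split; [lra|move=> nu _ q []].
have [l [e [he Hl]]] := IH (fun q' Hq' => Hq q' (or_intror Hq')).
have [oq qmu] := Hq q (or_introl eq_refl).
have [lp [e0 [he0 Hlp]]] := oq _ qmu.
exists (map (lift (projT1 q)) lp ++ l), (Rmin e e0); split; first by apply: Rmin_glb_lt.
move=> nu Hnu q' [<-|Hq'].
  apply: Hlp => psi Hpsi.
  have := Hnu (lift (projT1 q) psi) ltac:(apply: in_or_app; left; exact: in_map).
  by have := Rmin_r e e0; rewrite /hJ /Jmap /lift; lra.
apply: Hl => // phi Hphi.
have := Hnu phi ltac:(apply: in_or_app; right; exact: Hphi).
have := Rmin_l e e0; lra.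
Qed.

Section Inverse.
Variable a0 : A.
Hypothesis hXc : top_compact TL.
Hypothesis hX0 : zero_dim TL.

Lemma approx2 (phi1 phi2 : CF TL) (e : R) : 0 < e ->
  exists c (psi1 psi2 : CF (T c)), forall x : L,
    Rabs (proj1_sig psi1 (proj1_sig x c) - proj1_sig phi1 x) <= e /\
    Rabs (proj1_sig psi2 (proj1_sig x c) - proj1_sig phi2 x) <= e.
Proof.
move=> he.
have [c1 [psi1 H1]] := approx a0 hXc hX0 phi1 e he.
have [c2 [psi2 H2]] := approx a0 hXc hX0 phi2 e he.
have [d [h1 h2]] := le_ub c1 c2.
by exists d, (pull c1 d h1 psi1), (pull c2 d h2 psi2) => x /=; rewrite !thread.
Qed.

(* [g (h mu) = mu]: both sides are within [e] of [mu (psi o p_c)] when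
   [psi o p_c] approximates [phi] within [e]. *)
Lemma g_h (mu : CF TL -> R) : maxmin TL mu -> g (hJ le X p T mu) = mu.
Proof.
move=> hmu; have hm := h_maxmin mu hmu.
apply: functional_extensionality => phi; apply: eq_of_close => e he.
have [c [psi H]] := approx a0 hXc hX0 phi e he.
have A1 := g_approx _ hm phi c psi e (Rlt_le _ _ he) H.
have A2 := mm_close TL (lim_top_topology le X p T) mu hmu (lift c psi) phi e (Rlt_le _ _ he) H.
have := Rabs_triang (g (hJ le X p T mu) phi - mu (lift c psi)) (mu (lift c psi) - mu phi).
replace (g (hJ le X p T mu) phi - mu (lift c psi) + (mu (lift c psi) - mu phi))
  with (g (hJ le X p T mu) phi - mu phi) by ring.
have E : hJ le X p T mu c psi = mu (lift c psi) by [].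
by rewrite E in A1; lra.
Qed.

Variable m : forall a, CF (T a) -> R.
Hypothesis hm : limJ le X p T pc m.

Lemma g_const (c : R) (phi : CF TL) : (forall x, proj1_sig phi x = c) -> g m phi = c.
Proof.
move=> Hphi.
rewrite -(mm_const (T a0) (m a0) (m_maxmin m hm a0) (cf_const (T a0) (htop a0) c) c) //.
apply: eq_of_close => e he.
suff : Rabs (g m phi - m a0 (cf_const (T a0) (htop a0) c)) <= 0 by lra.
apply: (g_approx m hm) => [|x /=]; first exact: Rle_refl.
by rewrite Hphi Rminus_diag Rabs_R0; lra.
Qed.

Lemma g_max (phi psi chi : CF TL) :
  (forall x, proj1_sig chi x = Rmax (proj1_sig phi x) (proj1_sig psi x)) ->
  g m chi = Rmax (g m phi) (g m psi).
Proof.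
move=> Hchi; apply: eq_of_close => e he.
have [c [psi1 [psi2 H]]] := approx2 phi psi e he.
pose chic := cf_max (T c) (htop c) psi1 psi2.
have Ec : m c chic = Rmax (m c psi1) (m c psi2) by apply: (mm_max (T c) (m c) (m_maxmin m hm c)).
have Achi : Rabs (g m chi - m c chic) <= e.
  apply: (g_approx m hm); [lra|] => x /=; rewrite Hchi; apply: Rle_trans (Rmax_lip _ _ _ _) _.
  by have [] := H x; apply: Rmax_lub.
have A1 : Rabs (g m phi - m c psi1) <= e by apply: (g_approx m hm); [lra|] => x; have [] := H x.
have A2 : Rabs (g m psi - m c psi2) <= e by apply: (g_approx m hm); [lra|] => x; have [] := H x.
have B := Rmax_lip (g m phi) (g m psi) (m c psi1) (m c psi2).
have := Rmax_lub _ _ e A1 A2; rewrite Ec in Achi.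
have := Rabs_triang (g m chi - Rmax (m c psi1) (m c psi2)) (Rmax (m c psi1) (m c psi2) - Rmax (g m phi) (g m psi)).
rewrite Rabs_minus_sym in B.
replace (g m chi - Rmax (m c psi1) (m c psi2) + (Rmax (m c psi1) (m c psi2) - Rmax (g m phi) (g m psi)))
  with (g m chi - Rmax (g m phi) (g m psi)) by ring.
lra.
Qed.

Lemma g_min (c : R) (phi chi : CF TL) :
  (forall x, proj1_sig chi x = Rmin c (proj1_sig phi x)) -> g m chi = Rmin c (g m phi).
Proof.
move=> Hchi; apply: eq_of_close => e he.
have [d [psi H]] := approx a0 hXc hX0 phi e he.
have Ed : m d (cf_min (T d) c psi) = Rmin c (m d psi)
  by apply: (mm_min (T d) (m d) (m_maxmin m hm d)).
have Achi : Rabs (g m chi - m d (cf_min (T d) c psi)) <= e.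
  apply: (g_approx m hm); [lra|] => x /=; rewrite Hchi; apply: Rle_trans (min_lip _ _ _) _; have := H x; lra.
have A1 : Rabs (g m phi - m d psi) <= e by apply: (g_approx m hm); [lra|].
have B := min_lip c (g m phi) (m d psi).
rewrite Ed in Achi.
have := Rabs_triang (g m chi - Rmin c (m d psi)) (Rmin c (m d psi) - Rmin c (g m phi)).
rewrite Rabs_minus_sym in B.
replace (g m chi - Rmin c (m d psi) + (Rmin c (m d psi) - Rmin c (g m phi)))
  with (g m chi - Rmin c (g m phi)) by ring.
lra.
Qed.

Lemma g_maxmin : maxmin TL (g m).
Proof. by split; [|split]; [exact: g_const|exact: g_max|exact: g_min]. Qed.

Lemma h_g : hJ le X p T (g m) = m.
Proof.
apply: functional_extensionality_dep => a; apply: functional_extensionality => psi.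
apply: eq_of_close => e he.
suff : Rabs (g m (lift a psi) - m a psi) <= 0 by rewrite /hJ /Jmap /lift; lra.
apply: (g_approx m hm) => [|x /=]; first exact: Rle_refl.
by rewrite /lim_proj Rminus_diag Rabs_R0; lra.
Qed.

Lemma g_local_cont (phi : CF TL) (e : R) : 0 < e ->
  exists c (psi : CF (T c)), forall m', limJ le X p T pc m' ->
    Rabs (m' c psi - m c psi) < e / 3 -> Rabs (g m' phi - g m phi) < e.
Proof.
move=> he; have [c [psi Hpsi]] := approx a0 hXc hX0 phi (e / 3) ltac:(lra).
exists c, psi => m' hm' Hc.
have A1 := g_approx m' hm' phi c psi (e / 3) ltac:(lra) Hpsi.
have A2 := g_approx m hm phi c psi (e / 3) ltac:(lra) Hpsi.
move: A1 A2 Hc; unfold Rabs; repeat destruct Rcase_abs; lra.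
Qed.

End Inverse.

Lemma g_cont (a0 : A) (hXc : top_compact TL) (hX0 : zero_dim TL) :
  cont_on (prod_top (fun a => ptw_top (T a))) (limJ le X p T pc) (ptw_top TL) g.
Proof.
move=> U hU.
exists (fun m => exists B, prod_top (fun a => ptw_top (T a)) B /\ B m /\
   forall m', limJ le X p T pc m' -> B m' -> U (g m')); split.
  move=> m [B [hB [Bm HB]]]; have [lq [Hq Hs]] := hB m Bm.
  by exists lq; split => // y Hy; exists B; split => //; split => //; exact: Hs.
move=> m hm; split; first by case=> B [_ [Bm HB]]; exact: HB.
move=> Um; have [lf [eps [heps Hf]]] := hU _ Um.
suff [lq [Hq Hl]] : exists lq : list {a : A & (CF (T a) -> R) -> Prop},
    (forall q, In q lq -> ptw_top (T (projT1 q)) (projT2 q) /\ projT2 q (m (projT1 q))) /\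
    forall m', limJ le X p T pc m' -> (forall q, In q lq -> projT2 q (m' (projT1 q))) ->
      forall phi, In phi lf -> Rabs (g m' phi - g m phi) < eps.
  exists (fun m' => forall q, In q lq -> projT2 q (m' (projT1 q))); split.
    move=> m'' Hm''; exists lq; split => // q Hq'.
    by split; [exact: (proj1 (Hq q Hq'))|exact: Hm'' q Hq'].
  split; first by move=> q Hq'; exact: (proj2 (Hq q Hq')).
  by move=> m' hm' Hm'; apply: Hf; exact: Hl.
elim: lf {Hf} => [|phi lf [lq [Hq Hl]]]; first by exists nil; split => // m' _ _ phi [].
have [c [psi Hc]] := g_local_cont a0 hXc hX0 m hm phi eps heps.
exists (existT (fun a => (CF (T a) -> R) -> Prop) c (fun n => Rabs (n psi - m c psi) < eps / 3) :: lq).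
split.
  move=> q [<-|Hq']; last exact: Hq.
  by split; [exact: ptw_ball_open|rewrite /= Rminus_diag Rabs_R0; lra].
move=> m' hm' Hm' phi' [<-|Hphi']; first exact: Hc m' hm' (Hm' _ (or_introl eq_refl)).
by apply: Hl => // q Hq'; exact: Hm' q (or_intror Hq').
Qed.

Lemma h_homeo_inhabited (a0 : A) (hXc : top_compact TL) (hX0 : zero_dim TL) :
  homeo_on (ptw_top TL) (maxmin TL) (prod_top (fun a => ptw_top (T a))) (limJ le X p T pc)
    (hJ le X p T).
Proof.
split; first exact: h_maxmin.
exists g; split; first by move=> m hm; exact: g_maxmin a0 hXc hX0 m hm.
split; first by move=> mu hmu; exact: g_h a0 hXc hX0 mu hmu.
split; first by move=> m hm; exact: h_g m hm.
split; last exact: g_cont a0 hXc hX0.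
by move=> V hV; exists (fun mu => V (hJ le X p T mu)); split; [exact: h_cont|].
Qed.

(* For an empty index set the limit is a point, and so is each side. *)
Lemma h_homeo_empty (hA : ~ inhabited A) :
  homeo_on (ptw_top TL) (maxmin TL) (prod_top (fun a => ptw_top (T a))) (limJ le X p T pc)
    (hJ le X p T).
Proof.
have all_eq : forall x y : L, x = y.
  move=> [x hx] [y hy].
  have E : x = y by apply: functional_extensionality_dep => a; case: (hA (inhabits a)).
  by subst y; f_equal; apply: proof_irrelevance.
pose x0 : L := exist _ (fun a => False_rect _ (hA (inhabits a)))
  (fun a b _ => False_ind _ (hA (inhabits a))).
pose g0 (m : forall a, CF (T a) -> R) (phi : CF TL) := proj1_sig phi x0.
split; first exact: h_maxmin.
exists g0; split.
  move=> m _; split; first by move=> c phi Hphi; exact: Hphi.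
  by split => [phi psi chi|c phi chi] H; exact: H.
split.
  move=> mu hmu; apply: functional_extensionality => phi; symmetry.
  by apply: (mm_const TL mu hmu) => x; rewrite (all_eq x x0).
split; first by move=> m _; apply: functional_extensionality_dep => a; case: (hA (inhabits a)).
split; first by move=> V hV; exists (fun mu => V (hJ le X p T mu)); split; [exact: h_cont|].
move=> U hU; exists (fun _ => U (g0 (fun a _ => 0))); split; last by [].
by move=> m Hm; exists nil; split => // q [].
Qed.

End InverseLimit.

(* The theorem. *)
Theorem mainTheorem6 (A : Type) (le : A -> A -> Prop) (X : A -> Type)
  (T : forall a, topology (X a)) (p : forall a b, X b -> X a)
  (hdir : directed le)
  (htop : forall a, is_topology (T a))
  (hcomp : forall a, top_compact (T a))
  (hhaus : forall a, top_hausdorff (T a))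
  (pc : forall a b, le a b -> continuous (T b) (T a) (p a b))
  (hsys : inv_system le X p)
  (hXcomp : top_compact (@lim_top A le X p T))
  (hXhaus : top_hausdorff (@lim_top A le X p T))
  (hX0 : zero_dim (@lim_top A le X p T)) :
  homeo_on (ptw_top (@lim_top A le X p T)) (maxmin (@lim_top A le X p T))
           (@prod_top A (fun a => CF (T a) -> R) (fun a => ptw_top (T a))) (@limJ A le X p T pc)
           (@hJ A le X p T).
Proof.
case: (classic (inhabited A)) => [[a0]|hA].
  exact: (h_homeo_inhabited A le X T p hdir htop hcomp hhaus pc hsys a0 hXcomp hX0).
exact: (h_homeo_empty A le X T p pc hA).
Qed.
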